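(* Let $G$ be a looped simple graph and $S$ a subtransversal of $W(G)$. Then $S$ is a transverse circuit of $G$ if and only if there is a looped simple graph $H$ locally equivalent to $G$ and an induced isomorphism $\beta: M[IAS(G)]\to M[IAS(H)]$ such that $\beta(S)=\zeta_H(v)$ for some vertex $v\in V(H)$.
   Context: A looped simple graph is a finite graph in which each vertex carries at most one loop and no two distinct vertices are joined by more than one edge. ''Adjacent''/''neighbors'' refer only to distinct vertices joined by a non-loop edge; $N_G(v)$ is the set of neighbors of $v$ (never containing $v$), and the degree of $v$ is $|N_G(v)|$ (loops are not counted). $A(G)$ is the $V(G)\times V(G)$ matrix over $GF(2)$ with diagonal entry $1$ exactly at looped vertices and off-diagonal entry $1$ exactly for adjacent pairs. $IAS(G)=(I\mid A(G)\mid A(G)+I)$ over $GF(2)$, rows indexed by $V(G)$; for $v\in V(G)$ the $v$-columns of the three blocks are labelled $\phi_G(v),\chi_G(v),\psi_G(v)$. The isotropic matroid $M[IAS(G)]$ is the binary column matroid of $IAS(G)$ on the ground set $W(G)=\{\phi_G(v),\chi_G(v),\psi_G(v):v\in V(G)\}$. The vertex triple of $v$ is $\tau_G(v)=\{\phi_G(v),\chi_G(v),\psi_G(v)\}$. A subtransversal is a subset of $W(G)$ meeting each vertex triple in at most one element; a transversal meets each in exactly one. A transverse matroid of $G$ is the restriction of $M[IAS(G)]$ to a transversal; a transverse circuit of $G$ is a circuit of $M[IAS(G)]$ that is a subtransversal. Local equivalence: $G_\ell^v$ is obtained from $G$ by complementing the loop status of $v$; $G_s^v$ by complementing the adjacency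 status of every pair of distinct neighbors of $v$; $G_{ns}^v$ by doing this and also complementing the loop status of every neighbor of $v$. $H$ is locally equivalent to $G$ if $H$ is obtained from $G$ by a finite sequence of such operations (so $V(H)=V(G)$). Induced isomorphisms: for each such operation producing $G'$ from $G$ there is a matroid isomorphism $M[IAS(G)]\to M[IAS(G')]$ sending $\alpha_G(x)\mapsto\alpha_{G'}(x)$ for all $\alpha\in\{\phi,\chi,\psi\}$, $x\in V(G)$, except: for $G'=G_\ell^v$, $\chi_G(v)\mapsto\psi_{G'}(v)$ and $\psi_G(v)\mapsto\chi_{G'}(v)$; for $G'=G_{ns}^v$ with $v$ unlooped, $\phi_G(v)\mapsto\psi_{G'}(v)$, $\psi_G(v)\mapsto\phi_{G'}(v)$, and with $v$ looped, $\phi_G(v)\mapsto\chi_{G'}(v)$, $\chi_G(v)\mapsto\phi_{G'}(v)$; for $G'=G_s^v$, the same exchange at $v$ as for $G_{ns}^v$ and, in addition, for every $w\in N_G(v)$, $\chi_G(w)\mapsto\psi_{G'}(w)$ and $\psi_G(w)\mapsto\chi_{G'}(w)$. An induced isomorphism $M[IAS(G)]\to M[IAS(H)]$, for $H$ locally equivalent to $G$, is a composition of such isomorphisms along a sequence of operations transforming $G$ into $H$. Neighborhood circuit: $\zeta_G(v)=\{\chi_G(v)\}\cup\{\phi_G(w):w\in N_G(v)\}$ if $v$ is unlooped, and $\zeta_G(v)=\{\psi_G(v)\}\cup\{\phi_G(w):w\in N_G(v)\}$ if $v$ is looped. *)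

From HB Require Import structures.
From mathcomp Require Import all_boot.
Set Implicit Arguments. Unset Strict Implicit. Unset Printing Implicit Defensive.

Inductive lab := Phi | Chi | Psi.

Definition lab2o (a : lab) : 'I_3 :=
  match a with Phi => @Ordinal 3 0 isT | Chi => @Ordinal 3 1 isT | Psi => @Ordinal 3 2 isT end.
Definition o2lab (i : 'I_3) : lab :=
  match val i with 0 => Phi | 1 => Chi | _ => Psi end.
Lemma lab2oK : cancel lab2o o2lab. Proof. by case. Qed.
HB.instance Definition _ := Finite.copy lab (can_type lab2oK).

Section Graphs.
Variable V : finType.

(* A looped simple graph on the vertex set V is given by its adjacency matrix
   A(G) over GF(2) (booleans): G v w for v <> w is adjacency, G v v is the loop
   status of v. *)
Definition graph := V -> V -> bool.

Definition looped_simple (G : graph) : Prop := forall v w, G v w = G w v.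

Definition adj (G : graph) (v w : V) : bool := (v != w) && G v w.
Definition nbhd (G : graph) (v : V) : {set V} := [set w | adj G v w].

(* Ground set W(G): pairs (alpha, v), alpha in {phi,chi,psi}; the element
   (Phi,v) is phi_G(v), (Chi,v) is chi_G(v), (Psi,v) is psi_G(v). *)
Definition elt := (lab * V)%type.

(* column of IAS(G) = (I | A(G) | A(G)+I) labelled by an element *)
Definition col (G : graph) (x : elt) : V -> bool := fun w =>
  match x.1 with
  | Phi => w == x.2
  | Chi => G w x.2
  | Psi => G w x.2 (+) (w == x.2)
  end.

(* independence in the binary column matroid M[IAS(G)]: the columns are
   linearly independent over GF(2), i.e. no nonempty subset sums to zero *)
Definition indep (G : graph) (S : {set elt}) : Prop :=
  forall T : {set elt}, T \subset S ->
    (forall w : V, \big[addb/false]_(x in T) col G x w = false) -> T = set0.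

Definition circuit (G : graph) (C : {set elt}) : Prop :=
  ~ indep G C /\ forall D : {set elt}, D \proper C -> indep G D.

Definition subtransversal (S : {set elt}) : Prop :=
  forall x y, x \in S -> y \in S -> x.2 = y.2 -> x = y.

Definition transverse_circuit (G : graph) (S : {set elt}) : Prop :=
  subtransversal S /\ circuit G S.

Definition zeta (G : graph) (v : V) : {set elt} :=
  (if G v v then (Psi, v) else (Chi, v)) |: [set (Phi, w) | w in nbhd G v].

Definition op_loop (G : graph) (v : V) : graph := fun x y =>
  if (x == v) && (y == v) then ~~ G x y else G x y.
Definition op_s (G : graph) (v : V) : graph := fun x y =>
  if [&& x != y, adj G v x & adj G v y] then ~~ G x y else G x y.
Definition op_ns (G : graph) (v : V) : graph := fun x y =>
  if adj G v x && adj G v y then ~~ G x y else G x y.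

Definition swapl (a b c : lab) : lab :=
  if c == a then b else if c == b then a else c.

(* the isomorphisms induced by the local operations (relative to the graph
   G before the operation) *)
Definition map_loop (G : graph) (v : V) (x : elt) : elt :=
  if x.2 == v then (swapl Chi Psi x.1, x.2) else x.
Definition map_ns (G : graph) (v : V) (x : elt) : elt :=
  if x.2 == v then
    (if G v v then (swapl Phi Chi x.1, x.2) else (swapl Phi Psi x.1, x.2))
  else x.
Definition map_s (G : graph) (v : V) (x : elt) : elt :=
  if x.2 == v then map_ns G v x
  else if x.2 \in nbhd G v then (swapl Chi Psi x.1, x.2) else x.

(* induced_iso G H beta : H is obtained from G by a finite sequence of local
   operations and beta is the composition of the corresponding induced
   isomorphisms M[IAS(G)] -> M[IAS(H)] (as a map on labels). *)
Inductive induced_iso (G : graph) : graph -> (elt -> elt) -> Prop :=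
| ii_refl : induced_iso G G id
| ii_loop H b v : induced_iso G H b -> induced_iso G (op_loop H v) (map_loop H v \o b)
| ii_s H b v : induced_iso G H b -> induced_iso G (op_s H v) (map_s H v \o b)
| ii_ns H b v : induced_iso G H b -> induced_iso G (op_ns H v) (map_ns H v \o b).

End Graphs.

From HB Require Import structures.
From mathcomp Require Import all_boot.
Set Implicit Arguments. Unset Strict Implicit. Unset Printing Implicit Defensive.

(* Local operations act on IAS(G) as invertible row operations (add row v to
   the rows of the neighbours of v) followed by a relabelling of columns within
   vertex triples, so the induced maps carry circuits to circuits and preserve
   subtransversals; since neighbourhood circuits are circuits, this gives one
   direction.  Conversely, induct on the number of non-phi elements of a
   transverse circuit S.  If a non-phi element of S at u has entry 1 in row u,
   the operation G_ns^u turns it into phi(u).  Otherwise pick a non-phi x at u: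
   if a neighbour w of u has phi(w) outside S, then G_ns^w fixes S and puts a 1
   in row u of x; if not, x together with phi(N(u)) is a dependent subset of S,
   hence equal to S, and it is zeta(u). *)

Lemma big_addb_eq (I : finType) (P : pred I) a :
  \big[addb/false]_(i | P i) (i == a) = P a.
Proof.
case: (boolP (P a)) => Pa.
  by rewrite (bigD1 a) //= eqxx big1 // => i /andP[_ /negbTE].
by rewrite big1 // => i Pi; apply: contraNF Pa => /eqP <-.
Qed.

Lemma swaplK a b : a != b -> involutive (swapl a b).
Proof. by case: a b => [] [] // _ []. Qed.

Lemma subset_imset_image (aT rT : finType) (f : aT -> rT) (S : {set aT}) (D : {set rT}) :
  D \subset f @: S -> exists2 T : {set aT}, T \subset S & D = f @: T.
Proof.
move=> DfS; exists (S :&: f @^-1: D); first exact: subsetIl.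
apply/setP => y; apply/idP/imsetP => [yD | [x] ].
  have /imsetP[x xS fx] := subsetP DfS y yD.
  by exists x; rewrite // !inE xS -fx.
by rewrite !inE => /andP[_ xD] ->.
Qed.

Section IsotropicMatroid.
Variable V : finType.
Implicit Types (G H : graph V) (S T D : {set elt V}) (x y : elt V) (u v w : V) (l : lab).

Definition colsum H T w := \big[addb/false]_(x in T) col H x w.
Definition zero_sum H T := forall w, colsum H T w = false.

Lemma colsum_phi H T w : {in T, forall x, x.1 = Phi} -> colsum H T w = ((Phi, w) \in T).
Proof.
move=> Tphi; rewrite /colsum -[RHS](big_addb_eq (mem T)).
by apply: eq_bigr => -[a z] /Tphi /= ->; rewrite /col /= xpair_eqE eq_sym.
Qed.

Lemma zero_sum_phi H T : {in T, forall x, x.1 = Phi} -> zero_sum H T -> T = set0.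
Proof.
move=> Tphi T0; apply/setP => -[a z]; rewrite inE; apply/negbTE; apply/negP => zT.
by have := T0 z; rewrite colsum_phi // -(Tphi _ zT) zT.
Qed.

Lemma colsum_one_nonphi H T x w : x \in T -> x.1 != Phi ->
  {in T :\ x, forall y, y.1 = Phi} -> colsum H T w = col H x w (+) ((Phi, w) \in T).
Proof.
move=> xT xnphi Tphi; rewrite /colsum (big_setD1 x xT) /=; congr (_ (+) _).
rewrite -/(colsum H (T :\ x) w) colsum_phi // in_setD1 andb_idl // => _.
by apply: contraNneq xnphi => <-.
Qed.

Lemma circuit_minimal H S D :
  circuit H S -> D \subset S -> zero_sum H D -> D != set0 -> D = S.
Proof.
move=> [_ Smin] DS D0 Dn0; apply/eqP; apply: contraNT Dn0 => DnS.
by apply/eqP; apply: (Smin D); rewrite // properEneq DnS.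
Qed.

Lemma circuit_has_nonphi H S : circuit H S -> exists2 x, x \in S & x.1 != Phi.
Proof.
move=> [Sdep _].
case: (boolP [exists x in S, x.1 != Phi]) => [/existsP[x /andP[xS xn]] | /existsPn Sphi].
  by exists x.
case: Sdep => T TS; apply: zero_sum_phi => y yT.
by apply/eqP; have := Sphi y; rewrite (subsetP TS _ yT) /= negbK.
Qed.

Section ZeroSumTransfer.
Variables (H H' : graph V) (m : elt V -> elt V).
Hypotheses (m_inj : injective m) (m_sum : forall T, zero_sum H T <-> zero_sum H' (m @: T)).

Lemma indep_imset S : indep H S <-> indep H' (m @: S).
Proof.
split=> [Sind _ /subset_imset_image[T TS ->] /m_sum T0 | mSind T TS T0].
  by rewrite (Sind T TS T0) imset0.
by apply/eqP; rewrite -(imset_eq0 m); apply/eqP/mSind; [exact: imsetS | exact/m_sum].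
Qed.

Lemma circuit_imset S : circuit H S <-> circuit H' (m @: S).
Proof.
have Sind := indep_imset S.
split=> -[Sdep Smin]; split.
- by move/Sind.
- move=> D' /[dup] /proper_sub /subset_imset_image[D DS ->] mDS.
  apply/indep_imset; apply: Smin.
  rewrite properEneq DS andbT; apply/eqP => DeS.
  by rewrite DeS properE subxx andbF in mDS.
- by move/Sind.
- move=> D DS; apply/indep_imset; apply: Smin.
  by apply: imset_proper => // x y _ _ /m_inj.
Qed.

End ZeroSumTransfer.

Lemma subtransversal_imset (m : elt V -> elt V) S :
  injective m -> (forall x, (m x).2 = x.2) -> subtransversal S <-> subtransversal (m @: S).
Proof.
move=> m_inj m2; split=> Sst.
  move=> _ _ /imsetP[x xS ->] /imsetP[y yS ->].
  by rewrite !m2 => /(Sst _ _ xS yS) ->.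
move=> x y xS yS; rewrite -(m2 x) -(m2 y) => /(Sst _ _ (imset_f m xS) (imset_f m yS)).
exact: m_inj.
Qed.

Definition vertex_iso H H' (m : elt V -> elt V) :=
  [/\ injective m, forall x, (m x).2 = x.2 &
      forall T, zero_sum H T <-> zero_sum H' (m @: T)].

(* m realises the row operation "add row v to every row w with c w", which is
   invertible because c v = false. *)
Lemma row_add_zero_sum H H' (m : elt V -> elt V) (c : pred V) v :
  injective m -> c v = false ->
  (forall x w, col H' (m x) w = col H x w (+) (c w && col H x v)) ->
  forall T, zero_sum H T <-> zero_sum H' (m @: T).
Proof.
move=> m_inj cv m_col T.
have sumE w : colsum H' (m @: T) w = colsum H T w (+) (c w && colsum H T v).
  rewrite /colsum big_imset /=; last by move=> x y _ _ /m_inj.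
  rewrite (eq_bigr _ (fun x _ => m_col x w)) big_split /=; congr (_ (+) _).
  by case: (c w) => //; rewrite big1.
split=> T0 w; first by rewrite sumE !T0 andbF.
have Tv : colsum H T v = false by have := T0 v; rewrite sumE cv /= addbF.
by have := T0 w; rewrite sumE Tv andbF addbF.
Qed.

Lemma vertex_iso_id H : vertex_iso H H id.
Proof. by split=> // T; rewrite imset_id. Qed.

Lemma vertex_iso_comp H1 H2 H3 m1 m2 :
  vertex_iso H1 H2 m1 -> vertex_iso H2 H3 m2 -> vertex_iso H1 H3 (m2 \o m1).
Proof.
move=> [inj1 snd1 sum1] [inj2 snd2 sum2]; split; first exact: inj_comp.
  by move=> x /=; rewrite snd2.
by move=> T; rewrite imset_comp; split=> [/sum1/sum2 | /sum2/sum1].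
Qed.

Section LocalOperations.
Variables (H : graph V) (v : V).
Hypothesis H_ls : looped_simple H.

Lemma looped_simple_op_loop : looped_simple (op_loop H v).
Proof. by move=> x y; rewrite /op_loop [(y == v) && _]andbC H_ls. Qed.

Lemma looped_simple_op_ns : looped_simple (op_ns H v).
Proof. by move=> x y; rewrite /op_ns [adj H v y && _]andbC H_ls. Qed.

Lemma looped_simple_op_s : looped_simple (op_s H v).
Proof. by move=> x y; rewrite /op_s [y == x]eq_sym [adj H v y && _]andbC H_ls. Qed.

Lemma map_loopK : involutive (map_loop H v).
Proof.
move=> [l y]; rewrite /map_loop /=.
by case: (eqVneq y v) => [->|yv] /=; rewrite ?eqxx ?(negbTE yv) ?swaplK.
Qed.

Lemma map_nsK : involutive (map_ns H v).
Proof.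
move=> [l y]; rewrite /map_ns /=.
case: (eqVneq y v) => [->|yv] /=; rewrite ?eqxx ?(negbTE yv) //.
by case: (H v v); rewrite /= eqxx swaplK.
Qed.

Lemma map_sK : involutive (map_s H v).
Proof.
move=> [l y]; rewrite /map_s /map_ns /=.
case: (eqVneq y v) => [->|yv] /=; rewrite ?eqxx ?(negbTE yv).
  by case: (H v v); rewrite /= eqxx swaplK.
by case: (boolP (y \in nbhd H v)) => yN /=; rewrite ?(negbTE yv) ?yN ?(negbTE yN) ?swaplK.
Qed.

Lemma snd_map_loop x : (map_loop H v x).2 = x.2.
Proof. by rewrite /map_loop; case: ifP. Qed.

Lemma snd_map_ns x : (map_ns H v x).2 = x.2.
Proof. by rewrite /map_ns; case: ifP => //; case: ifP. Qed.

Lemma snd_map_s x : (map_s H v x).2 = x.2.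
Proof. by rewrite /map_s; case: ifP => _; [exact: snd_map_ns | case: ifP]. Qed.

Lemma col_op_loop x w : col (op_loop H v) (map_loop H v x) w = col H x w.
Proof.
case: x => l y; rewrite /map_loop /op_loop /col /=.
case: (eqVneq y v) => [->|yv] /=.
  case: l => /=; rewrite /swapl /=; case: (eqVneq w v) => [wv|wv] /=; rewrite ?wv ?eqxx //=;
  by case: (H v v); case: (H w v).
by case: l => //=; rewrite (negbTE yv) andbF.
Qed.

Lemma col_op_ns x w :
  col (op_ns H v) (map_ns H v x) w = col H x w (+) (adj H v w && col H x v).
Proof.
case: x => l y; rewrite /map_ns /op_ns /col /adj /=.
case: (eqVneq y v) => [->|yv] /=.
  case: (boolP (H v v)) => hv; case: l => /=; rewrite /swapl /=;
  case: (eqVneq w v) => [->|wv] /=; rewrite ?eqxx ?hv ?(H_ls v w) /=;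
  try (by case: (H w v)); by move: hv => /negbTE ->.
have vy : (v == y) = false by rewrite eq_sym (negbTE yv).
case: l => /=; rewrite ?vy /= ?andbF ?addbF //;
by case: (v != w); case: (H v w); case: (H v y); case: (H w y); case: (w == y).
Qed.

Lemma col_op_s x w :
  col (op_s H v) (map_s H v x) w = col H x w (+) (adj H v w && col H x v).
Proof.
case: x => l y; rewrite /map_s /map_ns /op_s /col /adj /nbhd /=.
case: (eqVneq y v) => [->|yv] /=.
  case: (boolP (H v v)) => hv; case: l => /=; rewrite /swapl /=;
  case: (eqVneq w v) => [->|wv] /=; rewrite ?eqxx ?hv ?(H_ls v w) /= ?andbF /=;
  try (by case: (H w v)); by move: hv => /negbTE ->.
have vy : (v == y) = false by rewrite eq_sym (negbTE yv).
rewrite inE /adj vy /=.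
case hvy: (H v y); case: l => /=; rewrite /swapl /= ?vy /= ?andbF ?addbF ?andbT //;
case: (eqVneq w y) => [->|wy] /=; rewrite ?vy ?hvy ?eqxx /= ?andbF ?andbT ?addbT ?addbF //;
by case: (v != w); case: (H v w); case: (H w y); case: (H y y).
Qed.

Lemma adj_irrefl : adj H v v = false.
Proof. by rewrite /adj eqxx. Qed.

Lemma vertex_iso_op_loop : vertex_iso H (op_loop H v) (map_loop H v).
Proof.
split; [exact: inv_inj map_loopK | exact: snd_map_loop |].
apply: (@row_add_zero_sum _ _ _ pred0 v) => // [|x w]; first exact: inv_inj map_loopK.
by rewrite col_op_loop addbF.
Qed.

Lemma vertex_iso_op_ns : vertex_iso H (op_ns H v) (map_ns H v).
Proof.
split; [exact: inv_inj map_nsK | exact: snd_map_ns |].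
exact: row_add_zero_sum (inv_inj map_nsK) adj_irrefl col_op_ns.
Qed.

Lemma vertex_iso_op_s : vertex_iso H (op_s H v) (map_s H v).
Proof.
split; [exact: inv_inj map_sK | exact: snd_map_s |].
exact: row_add_zero_sum (inv_inj map_sK) adj_irrefl col_op_s.
Qed.

End LocalOperations.

Lemma induced_iso_vertex_iso G H b :
  looped_simple G -> induced_iso G H b -> looped_simple H /\ vertex_iso G H b.
Proof.
move=> G_ls; elim=> {H b} [|H b v _ [H_ls bI]|H b v _ [H_ls bI]|H b v _ [H_ls bI]].
- by split=> //; exact: vertex_iso_id.
- split; first exact: looped_simple_op_loop.
  exact: vertex_iso_comp bI (vertex_iso_op_loop _ _).
- by split; [exact: looped_simple_op_s | exact: vertex_iso_comp bI (vertex_iso_op_s _ H_ls)].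
- by split; [exact: looped_simple_op_ns | exact: vertex_iso_comp bI (vertex_iso_op_ns _ H_ls)].
Qed.

Lemma induced_iso_trans G H1 H2 b1 b2 :
  induced_iso G H1 b1 -> induced_iso H1 H2 b2 -> induced_iso G H2 (b2 \o b1).
Proof.
move=> I1; elim=> {H2 b2} [|H b v _ IH|H b v _ IH|H b v _ IH] //.
- exact: ii_loop.
- exact: ii_s.
- exact: ii_ns.
Qed.

Definition zeta_at H x := x |: [set (Phi, z) | z in nbhd H x.2].

Section NeighbourhoodCircuit.
Variables (H : graph V) (l : lab) (u : V).
Hypotheses (H_ls : looped_simple H) (l_nphi : l != Phi) (diag0 : ~~ col H (l, u) u).

Lemma col_nonphi_adj w : col H (l, u) w = adj H u w.
Proof.
move: diag0; rewrite /col /adj /=; case: l l_nphi => //= _.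
  by case: (eqVneq w u) => [-> /negbTE -> | _ _]; rewrite ?(H_ls w u).
case: (eqVneq w u) => [->|_]; first by rewrite eqxx; case: (H u u).
by rewrite (H_ls w u) addbF.
Qed.

Lemma zeta_at_phi : {in zeta_at H (l, u) :\ (l, u), forall y, y.1 = Phi}.
Proof.
by move=> y /setD1P[yx /setU1P[yx' | /imsetP[z _ ->]]] //; rewrite yx' eqxx in yx.
Qed.

Lemma zeta_at_zero_sum : zero_sum H (zeta_at H (l, u)).
Proof.
move=> w; rewrite (colsum_one_nonphi H w (setU11 _ _)) //; last exact: zeta_at_phi.
rewrite in_setU1 xpair_eqE eq_sym (negbTE l_nphi) /= mem_imset; last by move=> a b [].
by rewrite inE col_nonphi_adj addbb.
Qed.

Lemma zeta_at_zero_sum_subset T :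
  T \subset zeta_at H (l, u) -> zero_sum H T -> T = set0 \/ T = zeta_at H (l, u).
Proof.
move=> TZ T0; have Tphi y : y \in T -> y != (l, u) -> y.1 = Phi.
  by move=> yT yx; apply: zeta_at_phi; rewrite in_setD1 yx (subsetP TZ).
have [xT | xnT] := boolP ((l, u) \in T); [right | left].
  apply/eqP; rewrite eqEsubset TZ; apply/subsetP => y /setU1P[-> // | /imsetP[z zN ->]].
  have := T0 z; rewrite (colsum_one_nonphi H z xT) //.
    by rewrite inE in zN; rewrite col_nonphi_adj zN => /negbFE.
  by move=> t /setD1P[tx tT]; exact: Tphi.
apply: (zero_sum_phi _ T0) => y yT; apply: (Tphi _ yT).
by apply: contraNneq xnT => <-.
Qed.

Lemma zeta_at_circuit : circuit H (zeta_at H (l, u)).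
Proof.
split=> [Zind | D DZ T TD T0].
  have := Zind _ (subxx _) zeta_at_zero_sum => /setP/(_ (l, u)).
  by rewrite setU11 inE.
have [//|TeZ] := zeta_at_zero_sum_subset (subset_trans TD (proper_sub DZ)) T0.
by rewrite -TeZ properE TD andbF in DZ.
Qed.

Lemma zeta_at_zeta : zeta_at H (l, u) = zeta H u.
Proof.
move: diag0; rewrite /zeta /zeta_at /col.
by case: (l) l_nphi => //= _; case: (H u u); rewrite ?eqxx.
Qed.

End NeighbourhoodCircuit.

Lemma zeta_circuit H v : looped_simple H -> circuit H (zeta H v).
Proof.
set l := if H v v then Psi else Chi.
have l_nphi : l != Phi by rewrite /l; case: (H v v).
have diag0 : ~~ col H (l, v) v by rewrite /l /col /=; case: (H v v); rewrite ?eqxx.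
by move=> H_ls; rewrite -(zeta_at_zeta l_nphi diag0); exact: zeta_at_circuit.
Qed.

Definition nonphi_count S := #|[set x in S | x.1 != Phi]|.

Section Pivot.
Variables (H : graph V) (l : lab) (u : V).
Hypothesis l_nphi : l != Phi.

Lemma map_ns_pivot : col H (l, u) u -> map_ns H u (l, u) = (Phi, u).
Proof. by rewrite /map_ns /col /= eqxx; case: (l) l_nphi => //= _; case: (H u u). Qed.

Lemma map_ns_diag0 : ~~ col H (l, u) u -> map_ns H u (l, u) = (l, u).
Proof. by rewrite /map_ns /col /= eqxx; case: (l) l_nphi => //= _; case: (H u u). Qed.

Lemma map_ns_pivot_lt S : subtransversal S -> (l, u) \in S -> col H (l, u) u ->
  nonphi_count (map_ns H u @: S) < nonphi_count S.
Proof.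
move=> Sst xS pivot; have fixS y : y \in S -> y != (l, u) -> map_ns H u y = y.
  move=> yS yx; rewrite /map_ns ifF //; apply: contraNF yx => /eqP yu.
  exact/eqP/(Sst _ _ yS xS).
apply: proper_card; apply/properP; split.
  apply/subsetP => _ /setIdP[/imsetP[y yS ->]].
  have [-> | yx] := eqVneq y (l, u); first by rewrite map_ns_pivot.
  by rewrite fixS // inE yS.
exists (l, u); first by rewrite inE xS.
rewrite inE l_nphi andbT; apply/imsetP => -[y yS].
have [-> | yx] := eqVneq y (l, u).
  by rewrite map_ns_pivot // => -[Phil]; move: l_nphi; rewrite Phil eqxx.
by rewrite fixS // => xy; rewrite xy eqxx in yx.
Qed.

End Pivot.

Section Reduction.
Variables (H : graph V) (S : {set elt V}).
Hypotheses (H_ls : looped_simple H) (S_st : subtransversal S) (S_circ : circuit H S).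

Lemma map_ns_imset_id w : (Phi, w) \notin S ->
  {in S, forall y, y.1 != Phi -> ~~ col H y y.2} -> map_ns H w @: S = S.
Proof.
move=> wS diag0; rewrite -[RHS]imset_id; apply: eq_in_imset => -[l y] yS /=.
have [yw|yw] := eqVneq y w; last by rewrite /map_ns ifF //; apply/negbTE.
rewrite {y}yw in yS *.
have l_nphi : l != Phi by apply: contraNneq wS => <-.
exact: map_ns_diag0 l_nphi (diag0 _ yS l_nphi).
Qed.

Lemma col_op_ns_nbhd l u w : l != Phi -> ~~ col H (l, u) u -> w \in nbhd H u ->
  col (op_ns H w) (l, u) u.
Proof.
move=> l_nphi diag0; rewrite inE => uw.
have wu : adj H w u by rewrite /adj eq_sym (H_ls w u).
have uw' : u != w by case/andP: uw.
have := col_op_ns w H_ls (l, u) u; rewrite /map_ns ifF; last exact/negbTE.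
by move=> ->; rewrite (negbTE diag0) wu (col_nonphi_adj H_ls l_nphi diag0) uw.
Qed.

Lemma transverse_circuit_reduce :
  (exists u, S = zeta H u) \/
  exists H' b, induced_iso H H' b /\ nonphi_count (b @: S) < nonphi_count S.
Proof.
have [[l u] xS /= l_nphi] := circuit_has_nonphi S_circ.
have [/existsP[[l' u'] /and3P[yS /= l'_nphi pivot]] | /existsPn no_pivot] :=
  boolP [exists y in S, (y.1 != Phi) && col H y y.2].
  right; exists (op_ns H u'), (map_ns H u'); split; first exact: ii_ns (ii_refl H).
  exact: (map_ns_pivot_lt l'_nphi S_st yS pivot).
have diag0 : {in S, forall y, y.1 != Phi -> ~~ col H y y.2}.
  by move=> y yS y_nphi; have := no_pivot y; rewrite yS y_nphi.
have [/existsP[w /andP[wN wS]] | /existsPn Nu_in_S] :=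
  boolP [exists w, (w \in nbhd H u) && ((Phi, w) \notin S)].
  right; exists (op_ns (op_ns H w) u), (map_ns (op_ns H w) u \o map_ns H w).
  split; first exact: ii_ns (ii_ns w (ii_refl H)).
  rewrite imset_comp map_ns_imset_id //; apply: (map_ns_pivot_lt l_nphi S_st xS).
  exact: col_op_ns_nbhd l_nphi (diag0 _ xS l_nphi) wN.
left; exists u; rewrite -(zeta_at_zeta l_nphi (diag0 _ xS l_nphi)).
apply: esym; apply: (circuit_minimal S_circ).
- apply/subsetP => y /setU1P[-> // | /imsetP[z zN ->]].
  by have := Nu_in_S z; rewrite zN negbK.
- exact: zeta_at_zero_sum H_ls l_nphi (diag0 _ xS l_nphi).
- by apply/set0Pn; exists (l, u); exact: setU11.
Qed.

End Reduction.

Lemma transverse_circuit_zeta H S :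
  looped_simple H -> subtransversal S -> circuit H S ->
  exists H' b v, induced_iso H H' b /\ b @: S = zeta H' v.
Proof.
have [n] := ubnP (nonphi_count S); elim: n H S => // n IH H S Sn H_ls S_st S_circ.
have [[v ->] | [H1 [b1 [I1 b1S]]]] := transverse_circuit_reduce H_ls S_st S_circ.
  by exists H, id, v; rewrite imset_id; split; first exact: ii_refl.
have [H1_ls [b1_inj b1_snd b1_sum]] := induced_iso_vertex_iso H_ls I1.
have b1S_st : subtransversal (b1 @: S) by apply/(subtransversal_imset S b1_inj b1_snd).
have b1S_circ : circuit H1 (b1 @: S) by apply/(circuit_imset b1_inj b1_sum).
have [H2 [b2 [v [I2 b2S]]]] :=
  IH H1 (b1 @: S) (leq_trans b1S Sn) H1_ls b1S_st b1S_circ.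
exists H2, (b2 \o b1), v; split; first exact: induced_iso_trans I1 I2.
by rewrite imset_comp.
Qed.

End IsotropicMatroid.

Theorem theorem1p2 (V : finType) (G : graph V) (S : {set elt V}) :
  looped_simple G -> subtransversal S ->
  (transverse_circuit G S <->
   exists (H : graph V) (beta : elt V -> elt V),
     [/\ looped_simple H, induced_iso G H beta &
         exists v : V, beta @: S = zeta H v]).
Proof.
move=> G_ls S_st; split=> [[_ S_circ] | [H [b [H_ls GH [v bS]]]]].
  have [H [b [v [GH bS]]]] := transverse_circuit_zeta G_ls S_st S_circ.
  have [H_ls _] := induced_iso_vertex_iso G_ls GH.
  by exists H, b; split=> //; exists v.
have [_ [b_inj _ b_sum]] := induced_iso_vertex_iso G_ls GH.
split=> //; apply/(circuit_imset b_inj b_sum); rewrite bS.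
exact: zeta_circuit.
Qed.
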